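(* Let ${\bf A}={\bf D}{\bf P}$ where ${\bf D}$ is an invertible diagonal $N\times N$ complex matrix and ${\bf P}$ is an $N\times N$ permutation matrix. If ${\bf A}$ is a linear automorphism of $L_{d,n}$, then ${\bf D}^2{\bf P}$ is a linear automorphism of $M_{d,n}$.
   Context: Let $d,n$ be positive integers, $N=\binom n2$, coordinates of $\mathbb C^N$ indexed by edges $\{i,j\}$ of $K_n$. For a complex configuration ${\bf p}$ of $n$ points in $\mathbb C^d$, $m({\bf p})$ has coordinates $m_{ij}=\sum_{k=1}^d({\bf p}_i^k-{\bf p}_j^k)^2$ (no conjugation); $M_{d,n}$ is the image of $m$; $L_{d,n}=s^{-1}(M_{d,n})$ where $s$ squares each coordinate. A linear automorphism of a variety $V\subset\mathbb C^N$ is a non-singular $N\times N$ complex matrix mapping $V$ bijectively onto itself. *)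

From mathcomp Require Import all_boot all_order all_algebra.
From mathcomp Require Import complex.
From mathcomp Require Import Rstruct.
Set Implicit Arguments. Unset Strict Implicit. Unset Printing Implicit Defensive.
Import Order.TTheory GRing.Theory Num.Theory.
Local Open Scope ring_scope.

Definition CC : numClosedFieldType := (Rdefinitions.R)[i].

(* Edges {i,j} of K_n, represented as pairs (i,j) with i < j. *)
Definition edge (n : nat) : finType := {p : 'I_n * 'I_n | (p.1 < p.2)%N}.

(* N = #edges = binom n 2; coordinates of C^N are indexed via enum_val. *)
Definition Nedges (n : nat) : nat := #|{: edge n}|.

(* A configuration of n points in C^d: row i is the point p_i. *)
(* m(p)_{ij} = sum_k (p_i^k - p_j^k)^2 (no conjugation). *)
Definition mmap (d n : nat) (p : 'M[CC]_(n, d)) : 'cV[CC]_(Nedges n) :=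
  \col_(e < Nedges n)
     let ij := val (enum_val e) in
     \sum_(k < d) (p ij.1 k - p ij.2 k) ^+ 2.

Definition Mset (d n : nat) (x : 'cV[CC]_(Nedges n)) : Prop :=
  exists p : 'M[CC]_(n, d), x = mmap p.

Definition sqmap (N : nat) (x : 'cV[CC]_N) : 'cV[CC]_N :=
  map_mx (fun z => z ^+ 2) x.

Definition Lset (d n : nat) (x : 'cV[CC]_(Nedges n)) : Prop :=
  @Mset d n (sqmap x).

Definition lin_automorphism (N : nat) (V : 'cV[CC]_N -> Prop) (A : 'M[CC]_N) : Prop :=
  A \in unitmx /\
  (forall x, V x -> V (A *m x)) /\
  (forall y, V y -> exists x, V x /\ A *m x = y).

From mathcomp Require Import all_boot all_order all_algebra.
From mathcomp Require Import perm.
Import GRing.Theory Num.Theory.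
Local Open Scope ring_scope.

(* Squaring coordinates intertwines DP with D^2 P, and every vector of C^N is a
   coordinatewise square, so the automorphism DP of s^-1(M) descends along s to
   the automorphism D^2 P of M. *)

Lemma sqmap_diag_perm {N : nat} (r : 'rV[CC]_N) (s : 'S_N) (x : 'cV[CC]_N) :
  sqmap (diag_mx r *m perm_mx s *m x) =
  diag_mx r *m diag_mx r *m perm_mx s *m sqmap x.
Proof.
rewrite -!mulmxA !mul_diag_mx -!row_permE; apply/matrixP => i j.
by rewrite !mxE exprMn mulrA expr2.
Qed.

Lemma sqmap_surj {N : nat} (y : 'cV[CC]_N) : exists x, y = sqmap x.
Proof.
exists (map_mx sqrtC y); apply/matrixP => i j.
by rewrite !mxE sqrtCK.
Qed.

Lemma lin_automorphism_preimage {N : nat} {V : 'cV[CC]_N -> Prop}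
    {f : 'cV[CC]_N -> 'cV[CC]_N} {A B : 'M[CC]_N} :
  (forall y, exists x, y = f x) -> (forall x, f (A *m x) = B *m f x) ->
  B \in unitmx -> lin_automorphism (fun x => V (f x)) A ->
  lin_automorphism V B.
Proof.
move=> f_surj fA Bu [_ [A_into A_onto]]; split; [done | split].
- move=> y; have [x ->] := f_surj y.
  by rewrite -fA; apply: A_into.
- move=> y; have [x ->] := f_surj y; move=> /A_onto[x' [Vfx' Ax']].
  by exists (f x'); rewrite -fA Ax'.
Qed.

Theorem lemma5p6 (d n : nat) (hd : (0 < d)%N) (hn : (0 < n)%N)
    (D P : 'M[CC]_(Nedges n)) :
  is_diag_mx D -> D \in unitmx -> is_perm_mx P ->
  lin_automorphism (@Lset d n) (D *m P) ->
  lin_automorphism (@Mset d n) (D *m D *m P).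
Proof.
move=> /diag_mxP[r ->] Du /is_perm_mxP[s ->] autA.
have D2Pu : diag_mx r *m diag_mx r *m perm_mx s \in unitmx.
  by move: autA.1; rewrite !unitmx_mul Du.
exact: (lin_automorphism_preimage sqmap_surj (sqmap_diag_perm r s) D2Pu autA).
Qed.
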